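(* Let $D$ be a finite subset of $\mathbb{N}^d\setminus\{0\}$ that is an antichain with respect to the natural partial order. Consider the collection $\mathcal{C}_D$ of all GNS $S\subseteq\mathbb{N}^d$ with $D\subseteq\mathcal{H}(S)$, ordered by inclusion. Then the maximal members of $\mathcal{C}_D$ are exactly the quasi-irreducible GNS $S$ with $FA(S)=D$.
   Context: $\mathbb{N}=\{0,1,2,\dots\}$. A GNS is a submonoid $S\subseteq\mathbb{N}^d$ with finite complement $\mathcal{H}(S)=\mathbb{N}^d\setminus S$ (gaps). Natural partial order: $x\le y$ iff $x^{(i)}\le y^{(i)}$ for all $i$. A relaxed monomial order is a total order $\prec$ on $\mathbb{N}^d$ with (i) $v\prec w\Rightarrow v\prec w+u$ for all $u\in\mathbb{N}^d$, (ii) $0\prec v$ for all $v\neq0$. A gap is Frobenius allowable if it equals $\max_\prec\mathcal{H}(S)$ for some relaxed monomial order $\prec$; $FA(S)$ is the set of Frobenius allowable gaps. A GNS $S$ is quasi-irreducible if for every $x\in\mathcal{H}(S)$, either $2x\in FA(S)$ or there is $F\in FA(S)$ with $F-x\in S$ (in particular $F-x\in\mathbb{N}^d$). *)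

From mathcomp Require Import all_boot.
Set Implicit Arguments. Unset Strict Implicit. Unset Printing Implicit Defensive.

Definition vec (d : nat) := {ffun 'I_d -> nat}.

Definition v0 {d : nat} : vec d := [ffun => 0].
Definition vadd {d : nat} (x y : vec d) : vec d := [ffun i => x i + y i].
(* pointwise (truncated) subtraction; only used when y <= x *)
Definition vsub {d : nat} (x y : vec d) : vec d := [ffun i => x i - y i].
Definition vle {d : nat} (x y : vec d) : bool := [forall i, x i <= y i].

(* A generalized numerical semigroup: a submonoid of N^d with finite complement. *)
Definition GNS {d : nat} (S : vec d -> Prop) : Prop :=
  [/\ S v0,
      (forall x y, S x -> S y -> S (vadd x y)) &
      exists gaps : seq (vec d), forall x, ~ S x -> x \in gaps].

Definition relaxed_monomial_order {d : nat} (lt : vec d -> vec d -> Prop) : Prop :=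
  [/\ (forall x, ~ lt x x),
      (forall x y z, lt x y -> lt y z -> lt x z),
      (forall x y, x <> y -> lt x y \/ lt y x),
      (forall v w u, lt v w -> lt v (vadd w u)) &
      (forall v, v <> v0 -> lt v0 v)].

(* F is Frobenius allowable: F = max_lt H(S) for some relaxed monomial order *)
Definition FA {d : nat} (S : vec d -> Prop) (F : vec d) : Prop :=
  ~ S F /\
  exists lt : vec d -> vec d -> Prop,
    relaxed_monomial_order lt /\ (forall h, ~ S h -> h = F \/ lt h F).

Definition quasi_irreducible {d : nat} (S : vec d -> Prop) : Prop :=
  forall x, ~ S x ->
    FA S (vadd x x) \/
    exists F, FA S F /\ vle x F /\ S (vsub F x).

Definition in_CD {d : nat} (D : seq (vec d)) (S : vec d -> Prop) : Prop :=
  GNS S /\ (forall x, x \in D -> ~ S x).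

Definition maximal_in_CD {d : nat} (D : seq (vec d)) (S : vec d -> Prop) : Prop :=
  in_CD D S /\
  forall T, in_CD D T -> (forall x, S x -> T x) -> (forall x, T x -> S x).

From mathcomp Require Import all_boot.
From mathcomp Require Import zify.
From Stdlib Require Import Classical.
Set Implicit Arguments. Unset Strict Implicit. Unset Printing Implicit Defensive.

(* Frobenius allowable gaps are the gaps that are maximal for the natural
   partial order: such a gap F dominates every gap that is not >= F in a
   relaxed monomial order built from "is >= F", total degree and a
   tie-breaking injection into nat.
   If S is maximal in C_D, then any set Q with S \/ Q closed under addition
   and Q disjoint from D lies in S.  Applied to {m} for a maximal gap m this
   gives m \in D; as D is an antichain and every gap lies below a maximal
   gap, FA(S) = D.  For quasi-irreducibility, a gap x violating it is first
   shown to be pseudo-Frobenius (a maximal gap of x + S equals x); then the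
   multiples j x with 2j > k, j <> k (kx the unique multiple of x in D, or
   k = 0 if there is none) are absorbed into S, forcing kx \in S or x \in S.
   Conversely, quasi-irreducibility with FA(S) = D prevents adding any gap x
   to S: either 2x or F = x + (F - x) would become an element of D. *)

Section Vectors.
Variable d : nat.
Implicit Types x y z s F : vec d.

Lemma vaddE x y i : vadd x y i = x i + y i. Proof. by rewrite ffunE. Qed.
Lemma vsubE x y i : vsub x y i = x i - y i. Proof. by rewrite ffunE. Qed.
Lemma v0E i : (@v0 d) i = 0. Proof. by rewrite ffunE. Qed.

Lemma vleP x y : reflect (forall i, x i <= y i) (vle x y).
Proof. exact: forallP. Qed.

Lemma vaddC x y : vadd x y = vadd y x.
Proof. by apply/ffunP=> i; rewrite !vaddE addnC. Qed.

Lemma vaddA x y z : vadd x (vadd y z) = vadd (vadd x y) z.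
Proof. by apply/ffunP=> i; rewrite !vaddE addnA. Qed.

Lemma vadd0 x : vadd x v0 = x.
Proof. by apply/ffunP=> i; rewrite vaddE v0E addn0. Qed.

Lemma vle_refl x : vle x x.
Proof. exact/vleP. Qed.

Lemma vle_trans x y z : vle x y -> vle y z -> vle x z.
Proof. by move=> /vleP xy /vleP yz; apply/vleP=> i; apply: leq_trans (xy i) (yz i). Qed.

Lemma vle_addr x y : vle x (vadd x y).
Proof. by apply/vleP=> i; rewrite vaddE leq_addr. Qed.

Lemma vsubK x F : vle x F -> vadd x (vsub F x) = F.
Proof. by move=> /vleP xF; apply/ffunP=> i; rewrite vaddE vsubE subnKC. Qed.

Lemma vaddKl x s : vsub (vadd x s) x = s.
Proof. by apply/ffunP=> i; rewrite vsubE vaddE addKn. Qed.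

Lemma vsubxx x : vsub x x = v0.
Proof. by apply/ffunP=> i; rewrite vsubE v0E subnn. Qed.

Lemma vadd_eq_self x y : vadd x y = x -> y = v0.
Proof.
move=> E; apply/ffunP=> i; have := congr1 (fun f : vec d => f i) E.
by rewrite vaddE v0E => /eqP; rewrite -{2}(addn0 (x i)) eqn_add2l => /eqP.
Qed.

Lemma vadd_eq0 x y : vadd x y = v0 -> y = v0.
Proof.
move=> E; apply/ffunP=> i; have := congr1 (fun f : vec d => f i) E.
by rewrite vaddE !v0E => /eqP; rewrite addn_eq0 => /andP[_ /eqP].
Qed.

Lemma vneq0 x : x <> v0 -> exists i, 0 < x i.
Proof.
move=> x0; apply: NNPP => all0; apply: x0; apply/ffunP=> i; rewrite v0E.
by apply/eqP; rewrite -leqn0 leqNgt; apply/negP=> xi; apply: all0; exists i.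
Qed.

Definition sz x : nat := \sum_i x i.

Lemma sz_add x y : sz (vadd x y) = sz x + sz y.
Proof. by rewrite /sz -big_split; apply: eq_bigr => i _; rewrite vaddE. Qed.

Lemma sz0 : sz v0 = 0.
Proof. by rewrite /sz big1 // => i _; rewrite v0E. Qed.

Lemma sz_gt0 x : x <> v0 -> 0 < sz x.
Proof. by move=> /vneq0 [i xi]; rewrite /sz (bigD1 i) //= ltn_addr. Qed.

Lemma vle_sz x y : vle x y -> x <> y -> sz x < sz y.
Proof.
move=> xy ne; rewrite -(vsubK xy) sz_add -[X in X < _]addn0 ltn_add2l sz_gt0 //.
by move=> E; apply: ne; rewrite -(vsubK xy) E vadd0.
Qed.

Definition vmul (k : nat) x : vec d := [ffun i => k * x i].

Lemma vmulE k x i : vmul k x i = k * x i. Proof. by rewrite ffunE. Qed.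

Lemma vmulD j k x : vadd (vmul j x) (vmul k x) = vmul (j + k) x.
Proof. by apply/ffunP=> i; rewrite vaddE !vmulE mulnDl. Qed.

Lemma vmul0 x : vmul 0 x = v0.
Proof. by apply/ffunP=> i; rewrite !ffunE. Qed.

Lemma vmul1 x : vmul 1 x = x.
Proof. by apply/ffunP=> i; rewrite vmulE mul1n. Qed.

Lemma vmul2 x : vmul 2 x = vadd x x.
Proof. by apply/ffunP=> i; rewrite vmulE vaddE mul2n addnn. Qed.

Lemma vmul_le j k x : j <= k -> vle (vmul j x) (vmul k x).
Proof. by move=> jk; apply/vleP=> i; rewrite !vmulE leq_mul2r jk orbT. Qed.

Lemma vmul_inj j k x : x <> v0 -> vmul j x = vmul k x -> j = k.
Proof.
move=> /vneq0 [i xi] /(congr1 (fun f : vec d => f i)).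
by rewrite !vmulE => /eqP; rewrite eqn_pmul2r // => /eqP.
Qed.

Lemma vmul_neq0 k x : 0 < k -> x <> v0 -> vmul k x <> v0.
Proof.
move=> k0 /vneq0 [i xi] /(congr1 (fun f : vec d => f i)) /eqP.
by rewrite vmulE v0E muln_eq0 -!leqn0 leqNgt k0 leqNgt xi.
Qed.

(* For F <> 0 there is a relaxed monomial order in which every vector not
   >= F lies below F: compare first "is >= F", then total degree, then pickle. *)
Lemma relaxed_order_below F : F <> v0 ->
  exists lt : vec d -> vec d -> Prop,
    relaxed_monomial_order lt /\ (forall h, ~~ vle F h -> lt h F).
Proof.
move=> F0; pose key z : nat := vle F z.
pose lt x y := (key x < key y) || (key x == key y) &&
   ((sz x < sz y) || (sz x == sz y) && (pickle x < pickle y)).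
have key_mono w u : key w <= key (vadd w u).
  rewrite /key; case: (boolP (vle F w)) => //= Fw.
  by rewrite (vle_trans Fw (vle_addr w u)).
have key0 : key v0 = 0.
  rewrite /key; case: (boolP (vle F v0)) => // /vleP F_le0.
  by have [i Fi] := vneq0 F0; move: (F_le0 i); rewrite v0E leqNgt Fi.
exists (fun x y => lt x y); split; first split.
- by move=> x; rewrite /lt; lia.
- by move=> x y z; rewrite /lt; lia.
- move=> x y ne; have : pickle x != pickle y by apply/eqP=> /(pcan_inj pickleK).
  rewrite /lt; lia.
- move=> v w u; case: (classic (u = v0)) => [-> | u0]; first by rewrite vadd0.
  have := sz_gt0 u0; have := key_mono w u; rewrite /lt sz_add; lia.
- move=> v v_ne0; have := sz_gt0 v_ne0; have := key_mono v0 v; rewrite /lt key0 sz0; lia.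
- move=> h Fh; have kF : key F = 1 by rewrite /key vle_refl.
  by rewrite /lt kF /key (negbTE Fh).
Qed.

End Vectors.

Section Gaps.
Variables (d : nat) (S : vec d -> Prop).
Implicit Types x y z s F : vec d.

Definition maximal_gap F := ~ S F /\ forall h, ~ S h -> vle F h -> h = F.

Definition pseudo_frobenius y := ~ S y /\ forall s, S s -> s <> v0 -> S (vadd y s).

(* S \/ Q is closed under addition (given that S is). *)
Definition closed_extension (Q : vec d -> Prop) :=
  (forall x y, Q x -> S y -> S (vadd x y) \/ Q (vadd x y)) /\
  (forall x y, Q x -> Q y -> S (vadd x y) \/ Q (vadd x y)).

Hypothesis S0 : S v0.

Lemma gap_neq0 x : ~ S x -> x <> v0.
Proof. by move=> nSx x0; apply: nSx; rewrite x0. Qed.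

Lemma FA_maximal_gap F : FA S F <-> maximal_gap F.
Proof.
split.
- move=> [nSF [lt [[lt_irr _ _ lt_add _] below]]]; split=> // h nSh Fh.
  case: (below h nSh) => // hF; exfalso; apply: (lt_irr h).
  by have := lt_add _ _ (vsub h F) hF; rewrite vsubK.
- move=> [nSF Fmax]; split=> //.
  have [lt [lt_order lt_below]] := relaxed_order_below (gap_neq0 nSF).
  exists lt; split=> // h nSh; case: (boolP (vle F h)) => [Fh | nFh].
  + by left; apply: Fmax.
  + by right; apply: lt_below.
Qed.

(* A maximal gap m is pseudo-Frobenius, and 2m \in S since 2m >= m, m <> 0. *)
Lemma maximal_gap_pseudo_frobenius m :
  maximal_gap m -> pseudo_frobenius m /\ S (vadd m m).
Proof.
move=> [nSm mmax]; split; first split=> // s Ss s0.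
- apply: NNPP => nS; apply: s0; apply: (@vadd_eq_self _ m).
  exact: mmax nS (vle_addr _ _).
- apply: NNPP => nS; apply: (gap_neq0 nSm).
  exact: vadd_eq_self (mmax _ nS (vle_addr _ _)).
Qed.

Lemma pseudo_frobenius_mul x k : pseudo_frobenius x -> 0 < k ->
  forall s, S s -> s <> v0 -> S (vadd (vmul k x) s).
Proof.
move=> [_ x_pf]; elim: k => // [[_ _ | k IH _]] s Ss s0.
  by rewrite vmul1; apply: x_pf.
rewrite -(vmulD 1 k.+1) vmul1 -vaddA; apply: x_pf; first exact: IH.
by move/vadd_eq0.
Qed.

End Gaps.

(* In a predicate with finitely many members, every member lies below a
   maximal member (induction on the distance to the largest total degree). *)
Lemma exists_maximal_above d (P : vec d -> Prop) (s : seq (vec d)) :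
  (forall x, P x -> x \in s) -> forall z, P z ->
  exists m, [/\ P m, vle z m & forall g, P g -> vle m g -> g = m].
Proof.
move=> Ps z Pz; pose B := \max_(g <- s) sz g.
have szB g : P g -> sz g <= B.
  by move=> Pg; apply: (leq_bigmax_seq (P := xpredT)); rewrite ?Ps.
have [n] := ubnP (B - sz z); elim: n z Pz => // n IH z Pz lt_n.
case: (classic (exists g, [/\ P g, vle z g & g <> z])) => [[g [Pg zg gz]] | no_above].
- have := vle_sz zg (nesym gz); have := szB g Pg => gB zg_sz.
  have [m [Pm gm mmax]] := IH g Pg ltac:(lia).
  by exists m; split=> //; apply: vle_trans zg gm.
- exists z; split=> //; first exact: vle_refl.
  by move=> g Pg zg; apply: NNPP => gz; apply: no_above; exists g.
Qed.

Lemma GNS_union d (S Q : vec d -> Prop) :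
  GNS S -> closed_extension S Q -> GNS (fun z => S z \/ Q z).
Proof.
move=> [S0 Sadd [gaps gapsP]] [QS QQ]; split.
- by left.
- move=> x y [Sx|Qx] [Sy|Qy].
  + by left; apply: Sadd.
  + by rewrite vaddC; apply: QS.
  + exact: QS.
  + exact: QQ.
- by exists gaps => x nSQ; apply: gapsP => Sx; apply: nSQ; left.
Qed.

Section MaximalMembers.
Variables (d : nat) (D : seq (vec d)) (S : vec d -> Prop).
Implicit Types x y z s F : vec d.
Hypothesis D0 : v0 \notin D.
Hypothesis D_antichain : forall a b, a \in D -> b \in D -> vle a b -> a = b.
Hypothesis S_max : maximal_in_CD D S.

Let S_gns : GNS S := proj1 (proj1 S_max).
Let S_avoids_D x : x \in D -> ~ S x := proj2 (proj1 S_max) x.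
Let S0 : S v0. Proof. by case: S_gns. Qed.

Lemma maximal_absorbs (Q : vec d -> Prop) :
  closed_extension S Q -> (forall x, x \in D -> ~ Q x) -> forall z, Q z -> S z.
Proof.
move=> Qclosed QD z Qz; apply: (proj2 S_max (fun z => S z \/ Q z)); last by right.
- split; first exact: GNS_union.
  by move=> x xD [Sx|Qx]; [apply: S_avoids_D xD Sx | apply: QD xD Qx].
- by move=> x Sx; left.
Qed.

(* A pseudo-Frobenius gap y with 2y \in S could be adjoined alone, so y \in D. *)
Lemma pseudo_frobenius_in_D y :
  pseudo_frobenius S y -> S (vadd y y) -> y \in D.
Proof.
move=> [nSy y_pf] S2y; apply: NNPP => yD; apply: nSy.
apply: (maximal_absorbs (Q := fun z => z = y)) => //; first split.
- move=> x s -> Ss; case: (classic (s = v0)) => [-> | s0].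
  + by right; rewrite vadd0.
  + by left; apply: y_pf.
- by move=> x x' -> ->; left.
- by move=> x xD xy; apply: yD; rewrite -xy.
Qed.

Lemma maximal_gap_in_D m : maximal_gap S m -> m \in D.
Proof.
by move=> /(maximal_gap_pseudo_frobenius S0) [m_pf S2m]; apply: pseudo_frobenius_in_D.
Qed.

(* Conversely each element of D is a maximal gap: it lies below a maximal gap,
   which belongs to the antichain D. *)
Lemma D_maximal_gap x : x \in D -> maximal_gap S x.
Proof.
move=> xD; case: S_gns => _ _ [gaps gapsP].
have [m [nSm xm mmax]] := exists_maximal_above gapsP (S_avoids_D xD).
have m_max : maximal_gap S m by split.
by rewrite (D_antichain xD (maximal_gap_in_D m_max) xm).
Qed.

Lemma FA_maximal x : FA S x <-> x \in D.
Proof.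
rewrite FA_maximal_gap //; split; [exact: maximal_gap_in_D | exact: D_maximal_gap].
Qed.

(* A gap x with F - x \notin S for all F \in D above x is pseudo-Frobenius: a
   maximal gap y = x + s0 of x + S is pseudo-Frobenius and not in D, hence
   2y is a gap of x + S above y unless s0 = 0. *)
Lemma gap_pseudo_frobenius x : ~ S x ->
  (forall F, F \in D -> vle x F -> ~ S (vsub F x)) -> pseudo_frobenius S x.
Proof.
move=> nSx x_noF; case: S_gns => _ Sadd [gaps gapsP].
pose P z := ~ S z /\ exists2 s, S s & z = vadd x s.
have Px : P x by split=> //; exists v0; rewrite ?vadd0.
have [y [[nSy [s0 Ss0 Ey]] _ ymax]] := exists_maximal_above (P := P) (fun z Pz => gapsP z Pz.1) Px.
subst y.
have y_pf : pseudo_frobenius S (vadd x s0).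
  split=> [// | s Ss s_ne0]; apply: NNPP => nS; apply: s_ne0; apply: vadd_eq_self.
  by apply: ymax (vle_addr _ _); split=> //; exists (vadd s0 s); rewrite ?vaddA //; apply: Sadd.
have yD : vadd x s0 \notin D.
  by apply/negP=> yD; apply: (x_noF _ yD (vle_addr _ _)); rewrite vaddKl.
suff s00 : s0 = v0 by rewrite s00 vadd0 in y_pf.
apply: NNPP => s0_ne0; move/negP: yD; apply; apply: pseudo_frobenius_in_D => //.
apply: NNPP => nS2y; apply: nSy.
have y_idem : vadd (vadd x s0) (vadd x s0) = vadd x s0.
  apply: ymax (vle_addr _ _); split=> //; exists (vadd s0 (vadd x s0)).
  + by rewrite vaddC; apply: y_pf.2.
  + by rewrite -vaddA.
by rewrite (vadd_eq_self y_idem).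
Qed.

Lemma multiples_in_D x j k :
  x <> v0 -> vmul j x \in D -> vmul k x \in D -> j = k.
Proof.
move=> x0 jD kD; apply: (vmul_inj x0); case: (leqP j k) => jk.
- exact: D_antichain jD kD (vmul_le x jk).
- by symmetry; apply: D_antichain kD jD (vmul_le x (ltnW jk)).
Qed.

(* The multiples j x with 2j > k, j <> k form a closed extension (the sum of
   two of them has index > k); if none lies in D, they all lie in S. *)
Lemma upper_multiples_in_S x k : pseudo_frobenius S x ->
  (forall j, k < 2 * j -> j != k -> vmul j x \notin D) ->
  forall j, k < 2 * j -> j != k -> S (vmul j x).
Proof.
move=> x_pf notD j jk jk_ne.
pose Q z := exists i, [/\ k < 2 * i, i != k & z = vmul i x].
apply: (maximal_absorbs (Q := Q)); last by exists j.
- split.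
  + move=> _ s [i [ik ik_ne ->]] Ss; case: (classic (s = v0)) => [-> | s0].
    * by right; exists i; rewrite vadd0.
    * by left; apply: pseudo_frobenius_mul => //; lia.
  + move=> _ _ [i [ik _ ->]] [i' [i'k _ ->]]; right; exists (i + i').
    by rewrite vmulD; split=> //; lia.
- by move=> z zD [i [ik ik_ne E]]; move: (notD i ik ik_ne); rewrite -E zD.
Qed.

(* A pseudo-Frobenius gap x has x \in D or 2x \in D: otherwise a multiple
   kx \in D (k > 2) would equal x + (k-1)x \in S, or all multiples lie in S. *)
Lemma pseudo_frobenius_multiple_in_D x :
  pseudo_frobenius S x -> x \in D \/ vadd x x \in D.
Proof.
move=> x_pf; have x0 := gap_neq0 S0 x_pf.1.
apply: NNPP => /not_or_and [xD x2D].
case: (classic (exists k, vmul k x \in D)) => [[k kD] | no_multiple].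
- have k_gt2 : 2 < k.
    case: k kD => [|[|[|k]]] kD //.
    + by rewrite vmul0 (negbTE D0) in kD.
    + by rewrite vmul1 in kD.
    + by rewrite vmul2 in kD.
  have S_pred : S (vmul k.-1 x).
    apply: (upper_multiples_in_S (k := k) x_pf) => [j _ jk | |]; try lia.
    by apply/negP=> jD; move/eqP: jk; apply; apply: multiples_in_D jD kD.
  apply: (S_avoids_D kD); have -> : k = 1 + k.-1 by lia.
  by rewrite -vmulD vmul1; apply: x_pf.2 S_pred (vmul_neq0 _ x0); lia.
- apply: x_pf.1; rewrite -(vmul1 x); apply: (upper_multiples_in_S (k := 0)) => // j _ _.
  by apply/negP=> jD; apply: no_multiple; exists j.
Qed.

Lemma maximal_quasi_irreducible : quasi_irreducible S.
Proof.
move=> x nSx; apply: NNPP => /not_or_and [not_double no_F].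
have FA_D := FA_maximal; have Sx_FA F : F \in D -> vle x F -> S (vsub F x) -> False.
  by move=> FD xF SFx; apply: no_F; exists F; split=> //; apply/FA_D.
have x_pf : pseudo_frobenius S x.
  by apply: gap_pseudo_frobenius => // F FD xF; apply: Sx_FA.
case: (pseudo_frobenius_multiple_in_D x_pf) => [xD | x2D].
- by apply: (Sx_FA x xD (vle_refl x)); rewrite vsubxx.
- by apply: not_double; apply/FA_D.
Qed.

End MaximalMembers.

(* A quasi-irreducible GNS with FA(S) = D is maximal in C_D: a member T of
   C_D containing S and a gap x of S would contain 2x or x + (F - x) = F. *)
Lemma quasi_irreducible_maximal d (D : seq (vec d)) (S : vec d -> Prop) :
  GNS S -> quasi_irreducible S -> (forall x, FA S x <-> x \in D) ->
  maximal_in_CD D S.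
Proof.
move=> S_gns S_qi FA_D; split.
  by split=> // x /FA_D [].
move=> T [[_ Tadd _] TD] ST x Tx; apply: NNPP => nSx.
case: (S_qi x nSx) => [/FA_D x2D | [F [/FA_D FD [xF SFx]]]].
- exact: TD _ x2D (Tadd _ _ Tx Tx).
- by apply: (TD _ FD); rewrite -(vsubK xF); apply: Tadd _ _ Tx (ST _ SFx).
Qed.

Theorem theorem3p2 (d : nat) (D : seq (vec d)) :
  v0 \notin D ->
  (forall a b, a \in D -> b \in D -> vle a b -> a = b) ->
  forall S : vec d -> Prop,
    maximal_in_CD D S <->
    (GNS S /\ quasi_irreducible S /\ (forall x, FA S x <-> x \in D)).
Proof.
move=> D0 D_antichain S; split.
- move=> S_max; split; first exact: (proj1 (proj1 S_max)).
  split; [exact: maximal_quasi_irreducible D0 D_antichain S_max | exact: FA_maximal D_antichain S_max].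
- by move=> [S_gns [S_qi FA_D]]; apply: quasi_irreducible_maximal.
Qed.
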